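(* Let $G$ be a finite group and $N\trianglelefteq G$ a normal subgroup. Then: (1) $\operatorname{Ind}_N^G:\operatorname{R}(N)\to\operatorname{R}(G)$ is a monomorphism if and only if $(n)_G=(n)_N$ for every $n\in N$. (2) $\operatorname{Ind}_N^G:\operatorname{RO}(N)\to\operatorname{RO}(G)$ is a monomorphism if and only if $(n)_G^{\pm}=(n)_N^{\pm}$ for every $n\in N$.
   Context: $\operatorname{R}(K)$, $\operatorname{RO}(K)$ are the complex and real representation groups of $K$ (Grothendieck groups of $\mathbb{C}K$-, resp. $\mathbb{R}K$-modules). $(n)_K$ is the conjugacy class of $n$ in $K$, and $(n)_K^{\pm}=(n)_K\cup(n^{-1})_K$ its real conjugacy class in $K$. *)

From HB Require Import structures.
From mathcomp Require Import all_boot all_order all_algebra all_fingroup all_solvable all_field all_character.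
Set Implicit Arguments. Unset Strict Implicit. Unset Printing Implicit Defensive.
Import Order.TTheory GRing.Theory Num.Theory.
Local Open Scope ring_scope.
Local Open Scope group_scope.

Definition real_repr_char (gT : finGroupType) (H : {group gT}) (phi : 'CF(H)) : Prop :=
  exists (n : nat) (rH : mx_representation algC H n),
    (forall x, x \in H -> forall i j, (rH x i j \is Num.real)%R) /\ cfRepr rH = phi.

(* The image of RO(H) (Grothendieck group of RH-modules) in class functions:
   differences of characters of real representations. *)
Definition RO_vchar (gT : finGroupType) (H : {group gT}) (phi : 'CF(H)) : Prop :=
  exists a b : 'CF(H), [/\ real_repr_char a, real_repr_char b & phi = (a - b)%R].

Definition real_class (gT : finGroupType) (H : {set gT}) (x : gT) : {set gT} :=
  (x ^: H) :|: (x^-1 ^: H).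

From HB Require Import structures.
From mathcomp Require Import all_boot all_order all_algebra all_fingroup all_solvable all_field all_character.
Set Implicit Arguments.
Unset Strict Implicit.
Import GRing.Theory Num.Theory.
Local Open Scope group_scope.
Local Open Scope ring_scope.

(* For N normal in G, 'Ind phi n = |G : N| phi n on N as soon as phi is constant
   on the G-classes of N, so Ind is injective on any group of class functions
   that are all G-class invariant.  When (n)_G = (n)_N every class function of N
   is; when the real classes agree, every class function invariant under
   inversion is, and characters of real representations are.  Conversely
   Ind (chi ^ g) = Ind chi, so injectivity forces each irreducible chi (resp.
   each chi + chi^*, the character of the realification of a representation
   affording chi) to be G-invariant, and these functions separate the classes
   (resp. the real classes) of N. *)

Definition realify_mx {m n} (A : 'M[algC]_(m, n)) : 'M[algC]_(m + m, n + n) :=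
  block_mx (map_mx (@Re _) A) (- map_mx (@Im _) A) (map_mx (@Im _) A) (map_mx (@Re _) A).

Lemma map_mx_ReM m n p (A : 'M[algC]_(m, n)) (B : 'M_(n, p)) :
  map_mx (@Re _) (A *m B) =
    map_mx (@Re _) A *m map_mx (@Re _) B - map_mx (@Im _) A *m map_mx (@Im _) B.
Proof.
apply/matrixP=> i j; rewrite !mxE raddf_sum -sumrB.
by apply: eq_bigr => k _ /=; rewrite ReM !mxE.
Qed.

Lemma map_mx_ImM m n p (A : 'M[algC]_(m, n)) (B : 'M_(n, p)) :
  map_mx (@Im _) (A *m B) =
    map_mx (@Re _) A *m map_mx (@Im _) B + map_mx (@Im _) A *m map_mx (@Re _) B.
Proof.
apply/matrixP=> i j; rewrite !mxE raddf_sum -big_split.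
by apply: eq_bigr => k _ /=; rewrite ImM !mxE [_ * 'Im (A _ _)]mulrC.
Qed.

Lemma realify_mxM m n p (A : 'M[algC]_(m, n)) (B : 'M_(n, p)) :
  realify_mx (A *m B) = realify_mx A *m realify_mx B.
Proof.
rewrite /realify_mx mulmx_block map_mx_ReM map_mx_ImM !mulmxN !mulNmx.
by congr block_mx; rewrite ?opprD // addrC.
Qed.

Lemma realify_mx1 n : realify_mx (1%:M : 'M[algC]_n) = 1%:M.
Proof.
have Re1 : map_mx (@Re _) (1%:M : 'M[algC]_n) = 1%:M.
  by apply/matrixP=> i j; rewrite !mxE; apply/Creal_ReP; rewrite rpred_nat.
have Im1 : map_mx (@Im _) (1%:M : 'M[algC]_n) = 0.
  by apply/matrixP=> i j; rewrite !mxE; apply/Creal_ImP; rewrite rpred_nat.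
by rewrite /realify_mx Re1 Im1 oppr0 -scalar_mx_block.
Qed.

Lemma realify_mx_real m n (A : 'M[algC]_(m, n)) i j : realify_mx A i j \is Num.real.
Proof.
rewrite /realify_mx -[i]splitK -[j]splitK.
by case: (split i) => i'; case: (split j) => j';
  rewrite ?block_mxEul ?block_mxEur ?block_mxEdl ?block_mxEdr !mxE
          ?rpredN ?Creal_Re ?Creal_Im.
Qed.

Lemma mxtrace_realify n (A : 'M[algC]_n) : \tr (realify_mx A) = \tr A + (\tr A)^*.
Proof.
have trRe : \tr (map_mx (@Re _) A) = 'Re (\tr A).
  by rewrite /mxtrace raddf_sum; apply: eq_bigr => k _; rewrite mxE.
by rewrite mxtrace_block trRe -mulr2n ReE -[_ *+ 2]mulr_natr mulfVK ?pnatr_eq0.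
Qed.

Section RealCharacters.

Variables (gT : finGroupType) (N : {group gT}).

Lemma real_repr_char_cfRepr_conjC n (rN : mx_representation algC N n) :
  real_repr_char (cfRepr rN + ((cfRepr rN)^*)%CF).
Proof.
have rNR : mx_repr N (fun x => realify_mx (rN x)).
  split=> [|x y Nx Ny]; first by rewrite repr_mx1 realify_mx1.
  by rewrite repr_mxM // realify_mxM.
exists (n + n)%N, (MxRepresentation rNR); split=> [x _ i j|]; first exact: realify_mx_real.
apply/cfun_inP=> x Nx; rewrite !cfunE Nx !mulr1n /=.
exact: mxtrace_realify.
Qed.

Lemma RO_vchar_real_repr_char (phi : 'CF(N)) : real_repr_char phi -> RO_vchar phi.
Proof.
move=> Rphi; exists phi, 0; split=> //; last by rewrite subr0.
by exists 0%N, (@grepr0 _ _ N); split=> [x _ [] |]; last exact: cfRepr0.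
Qed.

Lemma RO_vchar_irr_conjC i : RO_vchar ('chi[N]_i + ('chi_i)^*%CF).
Proof.
by apply: RO_vchar_real_repr_char; rewrite -irrRepr; apply: real_repr_char_cfRepr_conjC.
Qed.

Lemma real_repr_charV (phi : 'CF(N)) x : real_repr_char phi -> phi x^-1%g = phi x.
Proof.
case=> n [rN [rNR <-]]; rewrite char_inv ?cfRepr_char // conj_Creal // cfunE.
by case Nx: (x \in N); rewrite ?mulr0n ?rpred0 // mulr1n rpred_sum // => i _; apply: rNR.
Qed.

Lemma RO_vcharV (phi : 'CF(N)) x : RO_vchar phi -> phi x^-1%g = phi x.
Proof. by case=> a [b [Ra Rb ->]]; rewrite !cfunE !real_repr_charV. Qed.

End RealCharacters.

Section RealClasses.

Variables (gT : finGroupType) (N : {group gT}).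

Lemma real_classV (H : {set gT}) x : real_class H x^-1%g = real_class H x.
Proof. by rewrite /real_class invgK setUC. Qed.

Lemma real_classS (H K : {set gT}) x : H \subset K -> real_class H x \subset real_class K x.
Proof. by move=> sHK; rewrite setUSS ?classS. Qed.

Lemma cfun_real_class (phi : 'CF(N)) n m :
  (forall x, phi x^-1%g = phi x) -> m \in real_class N n -> phi m = phi n.
Proof.
by move=> phiV; rewrite inE => /orP[] /imsetP[h Nh ->]; rewrite cfunJ ?phiV.
Qed.

(* f x = (f x + f x^-1) / 2, and chi x^-1 = (chi x)^* for characters. *)
Lemma cfun_sum_cfdot_Re (f : 'CF(N)) :
  (forall y, f y^-1%g = f y) -> forall x, f x = \sum_i '[f, 'chi_i] * 'Re ('chi_i x).
Proof.
move=> fV x; have two_neq0 : 2%:R != 0 :> algC by rewrite pnatr_eq0.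
rewrite -[f x](mulfK two_neq0) mulr_natr mulr2n -{2}fV.
rewrite {1 2}(cfun_sum_cfdot f) !sum_cfunE -big_split mulr_suml.
apply: eq_bigr => i _ /=; rewrite !cfunE char_inv ?irr_char // -mulrDr -mulrA.
by rewrite ReE.
Qed.

Lemma mem_real_class_irr x y : y \in N ->
  (forall i, 'Re ('chi[N]_i x) = 'Re ('chi_i y)) -> x \in real_class N y.
Proof.
move=> Ny ReXY; pose f : 'CF(N) := '1_(y ^: N) + '1_(y^-1%g ^: N).
have fE z : f z = ((z \in y ^: N) + (z \in y^-1%g ^: N))%:R.
  by rewrite !cfunE !cfun_classE groupV Ny natrD.
have fV z : f z^-1%g = f z.
  have memV u v : (u^-1 \in v^-1 ^: N)%g = (u \in v ^: N) by rewrite classVg memV_invg.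
  by rewrite !fE -{1}[y]invgK !memV addnC.
have fXY : f x = f y.
  by rewrite !(cfun_sum_cfdot_Re fV); apply: eq_bigr => i _; rewrite ReXY.
move/eqP: fXY; rewrite !fE class_refl eqr_nat inE.
by case: (x \in y ^: N); case: (x \in _ ^: N).
Qed.

End RealClasses.

Section InvariantInduction.

Variables (gT : finGroupType) (G N : {group gT}).
Hypothesis sNG : N \subset G.

Lemma cfInd_invariantE (phi : 'CF(N)) :
  {in N & G, forall n g, phi (n ^ g)%g = phi n} ->
  {in N, forall n, 'Ind[G] phi n = #|G : N|%:R * phi n}.
Proof.
move=> phiJ n Nn; rewrite cfIndE // (eq_bigr (fun _ => phi n)) => [|g Gg]; last exact: phiJ.
rewrite sumr_const -(Lagrange sNG) -[phi n *+ _]mulr_natl natrM -mulrA.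
by rewrite mulKf // pnatr_eq0 -lt0n cardG_gt0.
Qed.

Lemma cfInd_inj_invariant (phi psi : 'CF(N)) :
  {in N & G, forall n g, (phi - psi) (n ^ g)%g = (phi - psi) n} ->
  'Ind[G] phi = 'Ind[G] psi -> phi = psi.
Proof.
move=> DJ IndE; apply/eqP; rewrite -subr_eq0; apply/eqP/cfun_inP=> n Nn.
have := cfInd_invariantE DJ Nn; rewrite linearB /= IndE subrr !cfunE.
by move/esym/eqP; rewrite mulf_eq0 pnatr_eq0 eqn0Ngt indexg_gt0 => /eqP.
Qed.

End InvariantInduction.

Section NormalInduction.

Variables (gT : finGroupType) (G N : {group gT}).
Hypothesis nsNG : N <| G.

Let sNG : N \subset G := normal_sub nsNG.

Lemma cfInd_conjg (phi : 'CF(N)) g : g \in G -> 'Ind[G] (phi ^ g)%CF = 'Ind[G] phi.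
Proof. by move=> Gg; rewrite -(cfConjgInd _ (normal_refl G) nsNG Gg) cfConjg_id. Qed.

Lemma cfConjg_invariant (phi : 'CF(N)) g n :
  g \in G -> (phi ^ g)%CF = phi -> phi (n ^ g)%g = phi n.
Proof. by move=> Gg {1}<-; rewrite cfConjgEJ // (subsetP (normal_norm nsNG)). Qed.

Lemma class_eq_of_cfInd_vchar_inj :
  {in 'Z[irr N] &, injective ('Ind[G, N] : 'CF(N) -> 'CF(G))} ->
  forall n, n \in N -> n ^: G = n ^: N.
Proof.
move=> IndI n Nn; apply/eqP; rewrite eqEsubset (classS _ sNG) andbT.
apply/subsetP=> _ /imsetP[g Gg ->]; apply/eq_irr_mem_classP=> // i.
apply: cfConjg_invariant => //; apply: IndI; rewrite ?irr_vchar ?cfInd_conjg //.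
by rewrite -conjg_IirrE irr_vchar.
Qed.

Lemma cfInd_inj_of_class_eq :
  (forall n, n \in N -> n ^: G = n ^: N) -> injective ('Ind[G, N] : 'CF(N) -> 'CF(G)).
Proof.
move=> classE phi psi; apply: (cfInd_inj_invariant sNG) => n g Nn Gg.
have /imsetP[h Nh ->] : (n ^ g \in n ^: N)%g by rewrite -classE ?imset_f.
by rewrite cfunJ.
Qed.

Lemma real_class_eq_of_cfInd_RO_inj :
  (forall phi psi : 'CF(N), RO_vchar phi -> RO_vchar psi ->
     'Ind[G, N] phi = 'Ind[G, N] psi -> phi = psi) ->
  forall n, n \in N -> real_class G n = real_class N n.
Proof.
move=> IndI; have conjgR n g : n \in N -> g \in G -> (n ^ g)%g \in real_class N n.
  move=> Nn Gg; apply: mem_real_class_irr => // i; rewrite !ReE; congr (_ / _).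
  have := @cfConjg_invariant ('chi_i + ('chi_i)^*%CF) g n Gg; rewrite !cfunE; apply.
  apply: IndI; [|exact: RO_vchar_irr_conjC|exact: cfInd_conjg].
  by rewrite linearD /= -cfAutConjg -!conjg_IirrE; apply: RO_vchar_irr_conjC.
move=> n Nn; apply/eqP; rewrite eqEsubset (real_classS _ sNG) andbT.
apply/subsetP=> _ /setUP[] /imsetP[g Gg ->]; first exact: conjgR.
by rewrite -real_classV conjgR ?groupV.
Qed.

Lemma cfInd_RO_inj_of_real_class_eq :
  (forall n, n \in N -> real_class G n = real_class N n) ->
  forall phi psi : 'CF(N), RO_vchar phi -> RO_vchar psi ->
    'Ind[G, N] phi = 'Ind[G, N] psi -> phi = psi.
Proof.
move=> classE phi psi ROphi ROpsi; apply: (cfInd_inj_invariant sNG) => n g Nn Gg.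
apply: cfun_real_class => [x|]; first by rewrite !cfunE !RO_vcharV.
by rewrite -classE // inE imset_f.
Qed.

End NormalInduction.

Theorem mainTheorem3 (gT : finGroupType) (G N : {group gT}) (nNG : N <| G) :
  ( {in 'Z[irr N] &, injective ('Ind[G, N] : 'CF(N) -> 'CF(G))}
      <-> (forall n, n \in N -> (n ^: G)%g = (n ^: N)%g) )
  /\
  ( (forall phi psi : 'CF(N), RO_vchar phi -> RO_vchar psi ->
        'Ind[G, N] phi = 'Ind[G, N] psi -> phi = psi)
      <-> (forall n, n \in N -> real_class G n = real_class N n) ).
Proof.
split; split.
- exact: class_eq_of_cfInd_vchar_inj.
- by move=> /(cfInd_inj_of_class_eq nNG) IndI phi psi _ _ /IndI.
- exact: real_class_eq_of_cfInd_RO_inj.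
- exact: cfInd_RO_inj_of_real_class_eq.
Qed.
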